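(* Let $Z\in\mathbb{R}^{N\times k}$ have rows $\mathbf{z}_1^\top,\dots,\mathbf{z}_N^\top$ and let $\Pi=\{\pi_1,\dots,\pi_C\}$ be a partition of $[N]$ into $C\ge 2$ nonempty classes. For $\pi\in\Pi$ let $\boldsymbol{\mu}_\pi=\frac{1}{|\pi|}\sum_{i\in\pi}\mathbf{z}_i$ and $\boldsymbol{\mu}_\Pi=\frac1N\sum_{j=1}^N\mathbf{z}_j$, and define $$\mathcal{M}_{kms}(\Pi,Z)=\frac{\sum_{\pi\in\Pi}\sum_{i\in\pi}\|\mathbf{z}_i-\boldsymbol{\mu}_\pi\|^2}{\sum_{\pi\in\Pi}|\pi|\,\|\boldsymbol{\mu}_\pi-\boldsymbol{\mu}_\Pi\|^2}.$$ For distinct $\pi,\pi'\in\Pi$ let $\xi_{\pi\to\pi'}=\{i\in\pi:\|\mathbf{z}_i-\boldsymbol{\mu}_\pi\|_2\ge\|\mathbf{z}_i-\boldsymbol{\mu}_{\pi'}\|_2\}$ and assume $|\xi_{\pi\to\pi'}|>0$ for all such pairs. Define $\mathcal{E}_{\pi\to\pi'}=\frac{|\xi_{\pi\to\pi'}|}{|\pi'|+|\pi|}$ and $$\mathcal{E}_{\Pi,Z}=C(C-1)\Big/\sum_{\pi\ne\pi',\ \pi,\pi'\in\Pi}\frac{1}{\mathcal{E}_{\pi\to\pi'}}.$$ Then $\mathcal{E}_{\Pi,Z}=O(\mathcal{M}_{kms}(\Pi,Z))$.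
   Context: $\mathcal{E}_{\Pi,Z}$ is the harmonic mean of the pairwise clustering error ratios; $\mathcal{M}_{kms}$ is the ratio of the intra-class measure to the inter-class measure (assumed nonzero). The implied constant in $O(\cdot)$ depends only on $C$. *)

From HB Require Import structures.
From mathcomp Require Import all_boot all_order all_algebra.
Set Implicit Arguments. Unset Strict Implicit. Unset Printing Implicit Defensive.
Import Order.TTheory GRing.Theory Num.Theory.
Local Open Scope ring_scope.

Section Defs.
Variables (R : rcfType) (N k C : nat).
Variables (Z : 'M[R]_(N, k)) (lab : 'I_N -> 'I_C).

(* the class pi_c of the partition, given by a labelling of the points *)
Definition cls (c : 'I_C) : {set 'I_N} := [set i | lab i == c].

Definition norm2 (v : 'rV[R]_k) : R := Num.sqrt (\sum_j (v 0 j) ^+ 2).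

Definition meanrow (A : {set 'I_N}) : 'rV[R]_k :=
  (#|A|%:R)^-1 *: \sum_(i in A) row i Z.

Definition mu (c : 'I_C) : 'rV[R]_k := meanrow (cls c).
Definition muAll : 'rV[R]_k := (N%:R)^-1 *: \sum_(j < N) row j Z.

Definition intra : R :=
  \sum_(c < C) \sum_(i in cls c) norm2 (row i Z - mu c) ^+ 2.
Definition inter : R :=
  \sum_(c < C) #|cls c|%:R * norm2 (mu c - muAll) ^+ 2.
Definition Mkms : R := intra / inter.

Definition xi (c c' : 'I_C) : {set 'I_N} :=
  [set i in cls c | norm2 (row i Z - mu c') <= norm2 (row i Z - mu c)].

Definition Err (c c' : 'I_C) : R :=
  #|xi c c'|%:R / (#|cls c'|%:R + #|cls c|%:R).

Definition EPi : R :=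
  (C * (C - 1))%:R / \sum_(c < C) \sum_(c' < C | c' != c) (Err c c')^-1.
End Defs.

From HB Require Import structures.
From mathcomp Require Import all_boot all_order all_algebra.
From mathcomp Require Import ring lra.
Set Implicit Arguments. Unset Strict Implicit. Unset Printing Implicit Defensive.
Import Order.TTheory GRing.Theory Num.Theory.
Local Open Scope ring_scope.

(* Fix a class pi0. The global mean minimises the weighted squared distance
   to the class means, so inter <= sum_pi |pi| ||mu_pi - mu_pi0||^2. For z in
   xi_{pi -> pi0}, ||mu_pi - mu_pi0||^2 <= 2 ||z - mu_pi0||^2 + 2 ||z - mu_pi||^2
   <= 4 ||z - mu_pi||^2, hence |xi_{pi -> pi0}| ||mu_pi - mu_pi0||^2 <= 4 intra.
   Finally 1/E_{pi -> pi0} is one term of the harmonic sum, so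
   E_{Pi,Z} / E_{pi -> pi0} <= C(C-1). Since |pi| <= |pi| + |pi0|, summing over
   pi gives E_{Pi,Z} inter <= 4 C^2 (C-1) intra. *)

Section SquaredNorm.
Variables (R : realDomainType) (k : nat).
Implicit Types (u v x a b m : 'rV[R]_k).

Definition sqnorm v : R := \sum_j v 0 j ^+ 2.

Lemma sqnorm_ge0 v : 0 <= sqnorm v.
Proof. by apply: sumr_ge0 => j _; exact: sqr_ge0. Qed.

Lemma sqnorm0 : sqnorm 0 = 0.
Proof. by apply: big1 => j _; rewrite mxE expr0n. Qed.

Lemma sqnormB_le u v : sqnorm (u - v) <= 2 * sqnorm u + 2 * sqnorm v.
Proof.
rewrite /sqnorm !mulr_sumr -big_split /=; apply: ler_sum => j _.
rewrite !mxE -subr_ge0.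
have -> : 2 * u 0 j ^+ 2 + 2 * v 0 j ^+ 2 - (u 0 j - v 0 j) ^+ 2
        = (u 0 j + v 0 j) ^+ 2 by ring.
exact: sqr_ge0.
Qed.

Lemma sqnorm_sub_le x a b :
  sqnorm (x - b) <= sqnorm (x - a) -> sqnorm (a - b) <= 4 * sqnorm (x - a).
Proof.
move=> le_xb_xa; have -> : a - b = (x - b) - (x - a).
  by rewrite opprB [RHS]addrC addrA subrK.
by apply: le_trans (sqnormB_le _ _) _; lra.
Qed.

Lemma weighted_sqr_mean (I : finType) (w y : I -> R) (m a : R) :
  (\sum_i w i) * m = \sum_i w i * y i ->
  \sum_i w i * (y i - a) ^+ 2
    = \sum_i w i * (y i - m) ^+ 2 + (\sum_i w i) * (m - a) ^+ 2.
Proof.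
move=> def_m; apply/eqP; rewrite -subr_eq0 opprD addrA -sumrB.
have -> : \sum_i (w i * (y i - a) ^+ 2 - w i * (y i - m) ^+ 2)
        = \sum_i (2 * (m - a) * (w i * y i) - (m - a) * (m + a) * w i).
  by apply: eq_bigr => i _; ring.
rewrite sumrB -!mulr_sumr -def_m; apply/eqP; ring.
Qed.

Lemma weighted_sqnorm_mean (I : finType) (w : I -> R) (y : I -> 'rV[R]_k) m a :
  (\sum_i w i) *: m = \sum_i w i *: y i ->
  \sum_i w i * sqnorm (y i - a)
    = \sum_i w i * sqnorm (y i - m) + (\sum_i w i) * sqnorm (m - a).
Proof.
move=> def_m.
have def_mj j : (\sum_i w i) * m 0 j = \sum_i w i * y i 0 j.
  have := congr1 (fun v : 'rV_k => v 0 j) def_m; rewrite /= !mxE summxE => ->.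
  by apply: eq_bigr => i _; rewrite !mxE.
rewrite /sqnorm mulr_sumr.
under eq_bigr do rewrite mulr_sumr.
under [X in _ = X + _]eq_bigr do rewrite mulr_sumr.
rewrite exchange_big [X in _ = X + _]exchange_big -big_split /=.
apply: eq_bigr => j _; rewrite !mxE.
under eq_bigr do rewrite !mxE.
under [X in _ = X + _]eq_bigr do rewrite !mxE.
exact: weighted_sqr_mean.
Qed.

Lemma weighted_sqnorm_mean_le (I : finType) (w : I -> R) (y : I -> 'rV[R]_k) m a :
  (forall i, 0 <= w i) -> (\sum_i w i) *: m = \sum_i w i *: y i ->
  \sum_i w i * sqnorm (y i - m) <= \sum_i w i * sqnorm (y i - a).
Proof.
move=> w_ge0 def_m; rewrite (weighted_sqnorm_mean a def_m) lerDl.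
by rewrite mulr_ge0 ?sqnorm_ge0 ?sumr_ge0.
Qed.

End SquaredNorm.

Section NonnegSums.
Variables (R : numDomainType) (I : finType).
Implicit Types (F : I -> R).

Lemma ler_sum_term (P : pred I) F j :
  P j -> (forall i, P i -> 0 <= F i) -> F j <= \sum_(i | P i) F i.
Proof.
move=> Pj F_ge0; rewrite (bigD1 j) //= lerDl.
by apply: sumr_ge0 => i /andP[Pi _]; exact: F_ge0.
Qed.

Lemma ler_sum_subset (A B : {pred I}) F :
  A \subset B -> (forall i, i \in B -> 0 <= F i) ->
  \sum_(i in A) F i <= \sum_(i in B) F i.
Proof.
move=> /subsetP sAB F_ge0; rewrite big_mkcond [leRHS]big_mkcond /=.
apply: ler_sum => i _; case: ifPn => [/sAB -> //|_].
by case: ifPn => // /F_ge0.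
Qed.

End NonnegSums.

Lemma div_sum_mul_le (R : numFieldType) (I : finType) (P : pred I) (F : I -> R)
    (n : R) j :
  0 <= n -> P j -> (forall i, P i -> 0 <= F i) ->
  n / (\sum_(i | P i) F i) * F j <= n.
Proof.
move=> n_ge0 Pj F_ge0; have le_Fj_S := ler_sum_term Pj F_ge0.
have [->|S_neq0] := eqVneq (\sum_(i | P i) F i) 0.
  by rewrite invr0 mulr0 mul0r.
have S_gt0 : 0 < \sum_(i | P i) F i by rewrite lt0r S_neq0; apply: sumr_ge0.
by rewrite mulrAC ler_pdivrMr // ler_wpM2l.
Qed.

Section Clustering.
Variables (R : rcfType) (N k C : nat) (Z : 'M[R]_(N, k)) (lab : 'I_N -> 'I_C).

Local Notation mu := (mu Z lab).
Local Notation cls := (cls lab).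

Lemma norm2_sqr (v : 'rV[R]_k) : norm2 v ^+ 2 = sqnorm v.
Proof. by rewrite sqr_sqrtr // sqnorm_ge0. Qed.

Lemma norm2_le (u v : 'rV[R]_k) : (norm2 u <= norm2 v) = (sqnorm u <= sqnorm v).
Proof. by rewrite ler_sqrt // sqnorm_ge0. Qed.

Lemma sum_cls (V : nmodType) (F : 'I_N -> V) :
  \sum_(c < C) \sum_(i in cls c) F i = \sum_i F i.
Proof.
rewrite [RHS](partition_big lab xpredT) //=.
by apply: eq_bigr => c _; apply: eq_bigl => i; rewrite inE.
Qed.

Lemma meanrowK (A : {set 'I_N}) : #|A|%:R *: meanrow Z A = \sum_(i in A) row i Z.
Proof.
have [->|/set0Pn A_neq0] := eqVneq A set0.
  by rewrite big_set0 cards0 scale0r.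
rewrite scalerA mulfV ?scale1r // pnatr_eq0 -lt0n; exact/card_gt0P.
Qed.

Lemma muAll_weighted :
  (\sum_(c < C) #|cls c|%:R) *: muAll Z = \sum_(c < C) #|cls c|%:R *: mu c.
Proof.
under [RHS]eq_bigr do rewrite meanrowK.
have -> : \sum_(c < C) (#|cls c|%:R : R) = #|[set: 'I_N]|%:R.
  rewrite cardsT -sumr_const -sum_cls.
  by apply: eq_bigr => c _; rewrite sumr_const.
have -> : muAll Z = meanrow Z [set: 'I_N].
  rewrite /muAll /meanrow cardsT card_ord; congr (_ *: _).
  by apply: eq_bigl => i; rewrite inE.
rewrite meanrowK sum_cls; apply: eq_bigl => i; exact: in_setT.
Qed.

Lemma intra_ge0 : 0 <= intra Z lab.
Proof. by do 2!apply: sumr_ge0 => ? _; exact: sqr_ge0. Qed.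

Lemma inter_ge0 : 0 <= inter Z lab.
Proof. by apply: sumr_ge0 => c _; rewrite mulr_ge0 ?ler0n ?sqr_ge0. Qed.

Lemma inter_le (c0 : 'I_C) :
  inter Z lab <= \sum_(c < C) #|cls c|%:R * sqnorm (mu c - mu c0).
Proof.
rewrite /inter; under eq_bigr do rewrite norm2_sqr.
apply: (@weighted_sqnorm_mean_le _ _ _ (fun c => #|cls c|%:R) mu) => [c|].
- exact: ler0n.
- exact: muAll_weighted.
Qed.

Lemma card_xi_sqnorm_le c c' :
  #|xi Z lab c c'|%:R * sqnorm (mu c - mu c') <= 4 * intra Z lab.
Proof.
have xi_le : #|xi Z lab c c'|%:R * sqnorm (mu c - mu c')
    <= \sum_(i in xi Z lab c c') 4 * sqnorm (row i Z - mu c).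
  rewrite mulr_natl -sumr_const; apply: ler_sum => i; rewrite inE => /andP[_].
  by rewrite norm2_le; exact: sqnorm_sub_le.
have xi_sub : xi Z lab c c' \subset cls c.
  by apply/subsetP => i; rewrite inE => /andP[].
apply: (le_trans xi_le); rewrite -mulr_sumr ler_wpM2l //.
apply: le_trans (ler_sum_subset xi_sub (fun i _ => sqnorm_ge0 _)) _.
rewrite /intra; under [leRHS]eq_bigr do under eq_bigr do rewrite norm2_sqr.
apply: (ler_sum_term (P := xpredT)) => // d _.
by apply: sumr_ge0 => i _; exact: sqnorm_ge0.
Qed.

Lemma EPi_ge0 : 0 <= EPi Z lab.
Proof.
rewrite /EPi divr_ge0 ?ler0n //; do 2!apply: sumr_ge0 => ? _.
by rewrite invr_ge0 divr_ge0 ?addr_ge0 ?ler0n.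
Qed.

Lemma EPi_mul_invErr_le c c' :
  c' != c -> EPi Z lab * (Err Z lab c c')^-1 <= (C * (C - 1))%:R.
Proof.
move=> c'_neq_c; rewrite /EPi pair_big_dep.
apply: (div_sum_mul_le (j := (c, c'))) => [|//|p _]; first exact: ler0n.
by rewrite invr_ge0 divr_ge0 ?addr_ge0 ?ler0n.
Qed.

Lemma EPi_mul_card_sqnorm_le (c0 c : 'I_C) :
  (c != c0 -> (0 < #|xi Z lab c c0|)%N) ->
  EPi Z lab * (#|cls c|%:R * sqnorm (mu c - mu c0))
    <= 4 * (C * (C - 1))%:R * intra Z lab.
Proof.
move=> xi_gt0; have [->|c_neq_c0] := eqVneq c c0.
  by rewrite subrr sqnorm0 !mulr0 !mulr_ge0 ?ler0n ?intra_ge0.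
have le_card : #|cls c|%:R * sqnorm (mu c - mu c0)
    <= (#|cls c0|%:R + #|cls c|%:R) * sqnorm (mu c - mu c0).
  by rewrite ler_wpM2r ?sqnorm_ge0 // lerDr ler0n.
apply: le_trans (ler_wpM2l EPi_ge0 le_card) _.
have -> : (#|cls c0|%:R + #|cls c|%:R) * sqnorm (mu c - mu c0)
    = (Err Z lab c c0)^-1 * (#|xi Z lab c c0|%:R * sqnorm (mu c - mu c0)).
  by rewrite /Err invf_div mulrA divfK // pnatr_eq0 -lt0n xi_gt0.
rewrite mulrA [4 * _]mulrC -[leRHS]mulrA; apply: ler_pM.
- by rewrite mulr_ge0 ?EPi_ge0 // invr_ge0 divr_ge0 ?addr_ge0 ?ler0n.
- by rewrite mulr_ge0 ?ler0n ?sqnorm_ge0.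
- by apply: EPi_mul_invErr_le; rewrite eq_sym.
- exact: card_xi_sqnorm_le.
Qed.

Lemma EPi_mul_inter_le (c0 : 'I_C) :
  (forall c, c != c0 -> (0 < #|xi Z lab c c0|)%N) ->
  EPi Z lab * inter Z lab <= 4 * (C * (C * (C - 1)))%:R * intra Z lab.
Proof.
move=> xi_gt0.
have -> : 4 * (C * (C * (C - 1)))%:R * intra Z lab
    = \sum_(c < C) 4 * (C * (C - 1))%:R * intra Z lab.
  by rewrite sumr_const card_ord -[_ *+ C]mulr_natl natrM; ring.
apply: le_trans (ler_wpM2l EPi_ge0 (inter_le c0)) _.
rewrite mulr_sumr; apply: ler_sum => c _; exact: EPi_mul_card_sqnorm_le (xi_gt0 c).
Qed.

End Clustering.

Theorem theorem2 (R : rcfType) (C : nat) (hC : (2 <= C)%N) :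
  exists K : R, 0 < K /\
  forall (N k : nat) (Z : 'M[R]_(N, k)) (lab : 'I_N -> 'I_C),
    (forall c : 'I_C, exists i : 'I_N, lab i = c) ->
    (forall c c' : 'I_C, c != c' -> (0 < #|xi Z lab c c'|)%N) ->
    inter Z lab != 0 ->
    EPi Z lab <= K * Mkms Z lab.
Proof.
have C_gt0 : (0 < C)%N by apply: leq_trans hC.
exists (4 * (C * (C * (C - 1)))%:R); split.
  by rewrite mulr_gt0 // ltr0n !muln_gt0 C_gt0 subn_gt0.
move=> N k Z lab _ xi_gt0 inter_neq0.
have inter_gt0 : 0 < inter Z lab by rewrite lt0r inter_neq0 inter_ge0.
rewrite /Mkms mulrA ler_pdivlMr //.
exact: EPi_mul_inter_le (fun c => xi_gt0 c (Ordinal C_gt0)).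
Qed.
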